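(* For every positive integer $n$, the Chinese monoid $\mathsf{Ch}_n$ has a faithful (i.e. injective) tropical linear representation $\rho:\mathsf{Ch}_n\to\mathcal U_{n(n+1)}(\mathbb T)$ by upper triangular tropical matrices; more precisely, the image consists of block-diagonal triangular matrices whose diagonal blocks are $2\times 2$ upper triangular tropical matrices.
   Context: The Chinese monoid of rank $n$ is the monoid $\mathsf{Ch}_n=\langle a_1,\dots,a_n\rangle$ presented by the relations $a_ja_ka_i=a_ka_ja_i=a_ka_ia_j$ for all $1\le i\le j\le k\le n$. The tropical (max-plus) semiring is $\mathbb T=\mathbb R\cup\{-\infty\}$ with addition $a\vee b=\max\{a,b\}$ and multiplication $a+b$ (ordinary sum). $\mathcal M_N(\mathbb T)$ denotes the monoid of $N\times N$ matrices over $\mathbb T$ with the induced matrix product $(AB)_{ij}=\max_k (A_{ik}+B_{kj})$, and $\mathcal U_N(\mathbb T)$ the submonoid of upper triangular matrices (entries below the diagonal equal to $-\infty$). A tropical linear representation of a monoid $\mathcal S$ is a monoid homomorphism $\rho:\mathcal S\to\mathcal M_N(\mathbb T)$, i.e. $\rho(xy)=\rho(x)\rho(y)$ for all $x,y$; it is faithful if injective. *)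

From Stdlib Require Import Reals.
From mathcomp Require Import all_boot all_algebra.
Set Implicit Arguments. Unset Strict Implicit. Unset Printing Implicit Defensive.

(* None stands for -oo, Some x for the real x. *)
Definition trop := option R.

Definition tadd (a b : trop) : trop :=
  match a, b with
  | None, _ => b
  | _, None => a
  | Some x, Some y => Some (Rmax x y)
  end.

Definition tmul (a b : trop) : trop :=
  match a, b with
  | Some x, Some y => Some (Rplus x y)
  | _, _ => None
  end.

Definition tmxmul (N : nat) (A B : 'M[trop]_N) : 'M[trop]_N :=
  \matrix_(i < N, j < N) \big[tadd/None]_(k < N) tmul (A i k) (B k j).

Definition tmx1 (N : nat) : 'M[trop]_N :=
  \matrix_(i < N, j < N) if i == j then Some R0 else None.

Definition upper_tri (N : nat) (A : 'M[trop]_N) : Prop :=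
  forall i j : 'I_N, (j < i)%N -> A i j = None.

Definition block_diag2 (N : nat) (A : 'M[trop]_N) : Prop :=
  forall i j : 'I_N, (i./2 != j./2)%N -> A i j = None.

(* Elements of Ch_n are words over the generators a_1..a_n (here 'I_n)
   modulo the congruence generated by
   a_j a_k a_i = a_k a_j a_i = a_k a_i a_j  for i <= j <= k. *)
Inductive chinese_cong (n : nat) : seq 'I_n -> seq 'I_n -> Prop :=
| chc_rel1 (i j k : 'I_n) (u v : seq 'I_n) :
    (i <= j)%N -> (j <= k)%N ->
    chinese_cong (u ++ [:: j; k; i] ++ v) (u ++ [:: k; j; i] ++ v)
| chc_rel2 (i j k : 'I_n) (u v : seq 'I_n) :
    (i <= j)%N -> (j <= k)%N ->
    chinese_cong (u ++ [:: k; j; i] ++ v) (u ++ [:: k; i; j] ++ v)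
| chc_refl (u : seq 'I_n) : chinese_cong u u
| chc_sym (u v : seq 'I_n) : chinese_cong u v -> chinese_cong v u
| chc_trans (u v w : seq 'I_n) :
    chinese_cong u v -> chinese_cong v w -> chinese_cong u w.

(* A tropical linear representation of Ch_n of dimension N, given on words:
   a monoid homomorphism from the free monoid that is constant on
   congruence classes (so it factors through Ch_n). *)
Definition chinese_trop_rep (n N : nat) (rho : seq 'I_n -> 'M[trop]_N) : Prop :=
  [/\ rho [::] = tmx1 N,
      (forall u v, rho (u ++ v) = tmxmul (rho u) (rho v)) &
      (forall u v, chinese_cong u v -> rho u = rho v)].

(* faithful: the induced map Ch_n -> M_N(T) is injective *)
Definition chinese_faithful (n N : nat) (rho : seq 'I_n -> 'M[trop]_N) : Prop :=
  forall u v, rho u = rho v -> chinese_cong u v.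

From Stdlib Require Import Reals Lra Lia Morphisms.
From mathcomp Require Import all_boot all_algebra zify.
From HB Require Import structures.
Set Implicit Arguments. Unset Strict Implicit. Unset Printing Implicit Defensive.

(* A word is sent to a block-diagonal matrix with one 2x2 block for each pair
   t <= j < n.  In block (t, j) the letter x has weight 1, 0 or -1 according as
   x <= t, t < x <= j or j < x, and a word w is sent to
   [[weight w, peak w], [-oo, 0]], where peak w is the largest weight of a prefix
   of w (and -oo when w is empty).  Weights are nonincreasing in the letter, and
   for such weights the three words of a Chinese relation have the same weight
   and the same peak, so the blocks define a representation.
   For faithfulness, every word is congruent to a staircase normal form: the
   rows r = 0, ..., n-1 in turn, row r being
   (r 0)^k(r,0) ... (r (r-1))^k(r,r-1) r^k(r,r).  The rows above j never raise a
   prefix weight, as each of their pairs and letters starts with a letter of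
   weight -1, while the rows up to j only contain letters of weight 1 or 0.  So
   block (t, j) reads off the number of letters <= t in the rows up to j; these
   numbers determine every exponent k(r,y), hence the normal form, hence the
   congruence class. *)

(** * The Chinese congruence on words over nat *)

(* Letters are plain naturals, so that normal forms can be built by recursion
   on the size of the alphabet. *)
Inductive chcong : seq nat -> seq nat -> Prop :=
| chcong_rel1 (i j k : nat) (u v : seq nat) : i <= j -> j <= k ->
    chcong (u ++ [:: j; k; i] ++ v) (u ++ [:: k; j; i] ++ v)
| chcong_rel2 (i j k : nat) (u v : seq nat) : i <= j -> j <= k ->
    chcong (u ++ [:: k; j; i] ++ v) (u ++ [:: k; i; j] ++ v)
| chcong_refl u : chcong u u
| chcong_sym u v : chcong u v -> chcong v u
| chcong_trans u v w : chcong u v -> chcong v w -> chcong u w.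

#[local] Hint Resolve chcong_refl : core.

#[local] Instance chcong_Equivalence : Equivalence chcong.
Proof. split; [exact: chcong_refl | exact: chcong_sym | exact: chcong_trans]. Qed.

Lemma chcong_invariant (T : Type) (f : seq nat -> T) :
  (forall u v s s', f s = f s' -> f (u ++ s ++ v) = f (u ++ s' ++ v)) ->
  (forall i j k, i <= j -> j <= k ->
     f [:: j; k; i] = f [:: k; j; i] /\ f [:: k; j; i] = f [:: k; i; j]) ->
  forall a b, chcong a b -> f a = f b.
Proof.
move=> f_ctx f_rel a b.
elim=> // [i j k u v ij jk|i j k u v ij jk|u v w _ -> _ ->] //;
  by apply: f_ctx; case: (f_rel i j k ij jk).
Qed.

Lemma chcong_ctx u v a b : chcong a b -> chcong (u ++ a ++ v) (u ++ b ++ v).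
Proof.
elim=> [i j k u0 v0 ij jk|i j k u0 v0 ij jk|w|w1 w2 _ IH|w1 w2 w3 _ IH1 _ IH2].
- by move: (@chcong_rel1 i j k (u ++ u0) (v0 ++ v) ij jk); rewrite -!catA.
- by move: (@chcong_rel2 i j k (u ++ u0) (v0 ++ v) ij jk); rewrite -!catA.
- exact: chcong_refl.
- exact: chcong_sym.
- exact: chcong_trans IH2.
Qed.

Lemma chcong_size a b : chcong a b -> size a = size b.
Proof.
apply: chcong_invariant => [u v s s' ss'|//]; first by rewrite !size_cat ss'.
Qed.

#[local] Instance cat_chcong_Proper : Proper (chcong ==> chcong ==> chcong) (@cat nat).
Proof.
move=> a a' ha b b' hb; transitivity (a' ++ b); first exact: (chcong_ctx [::] b ha).
by move: (chcong_ctx a' [::] hb); rewrite !cats0.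
Qed.

Lemma chcong_jki_kji i j k : i <= j <= k -> chcong [:: j; k; i] [:: k; j; i].
Proof. by case/andP=> hij hjk; apply: (@chcong_rel1 i j k [::] [::]). Qed.

Lemma chcong_kji_kij i j k : i <= j <= k -> chcong [:: k; j; i] [:: k; i; j].
Proof. by case/andP=> hij hjk; apply: (@chcong_rel2 i j k [::] [::]). Qed.

Lemma chcong_mmx m x : x <= m -> chcong [:: m; m; x] [:: m; x; m].
Proof. by move=> hx; apply: chcong_kji_kij; rewrite hx leqnn. Qed.

Lemma chcong_mzx m z x : z <= x <= m -> chcong [:: m; z; x] [:: x; m; z].
Proof.
move=> h; transitivity [:: m; x; z]; symmetry; [exact: chcong_kji_kij | exact: chcong_jki_kji].
Qed.

Lemma chcong_pairC m x y : x <= m -> y <= m ->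
  chcong ([:: m; x] ++ [:: m; y]) ([:: m; y] ++ [:: m; x]).
Proof.
wlog hxy : x y / x <= y => [W hx hy|hx hy].
  by case: (leqP x y) => [|/ltnW] h; [exact: W | symmetry; exact: W].
have hxym : x <= y <= m by rewrite hxy.
have -> : [:: m; x] ++ [:: m; y] = [:: m; x; m] ++ [:: y] by [].
have -> : [:: m; y] ++ [:: m; x] = [:: m] ++ [:: y; m; x] by [].
rewrite -(chcong_mmx hx) -[[:: m; m; x] ++ _]/([:: m] ++ [:: m; x; y]).
by rewrite -(chcong_kji_kij hxym) -(chcong_jki_kji hxym).
Qed.

(** * Staircase normal forms *)

Definition pair_pow (m y k : nat) : seq nat := flatten (nseq k [:: m; y]).

Definition pairs_row (m : nat) (k : nat -> nat) (L : seq nat) : seq nat :=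
  flatten [seq pair_pow m y (k y) | y <- L].

Definition row (m : nat) (k : nat -> nat) : seq nat :=
  pairs_row m k (iota 0 m) ++ nseq (k m) m.

Definition nf (m : nat) (K : nat -> nat -> nat) : seq nat :=
  flatten [seq row r (K r) | r <- iota 0 m].

Definition upd (T : Type) (f : nat -> T) (a : nat) (v : T) : nat -> T :=
  fun z => if z == a then v else f z.

Definition incr (k : nat -> nat) (y : nat) : nat -> nat := upd k y (k y).+1.

Definition transfer (k : nat -> nat) (y x : nat) : nat -> nat := incr (upd k y (k y).-1) x.

Lemma pair_powS m y k : pair_pow m y k.+1 = [:: m; y] ++ pair_pow m y k.
Proof. by []. Qed.

Lemma pairs_row_cons m k y L :
  pairs_row m k (y :: L) = pair_pow m y (k y) ++ pairs_row m k L.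
Proof. by []. Qed.

Lemma eq_in_pairs_row m k k' L : {in L, k =1 k'} -> pairs_row m k L = pairs_row m k' L.
Proof. by move=> ekk'; rewrite /pairs_row; congr flatten; apply/eq_in_map => y /ekk' ->. Qed.

Lemma nfS m K : nf m.+1 K = nf m K ++ row m (K m).
Proof. by rewrite /nf -addn1 iotaD map_cat flatten_cat /= cats0. Qed.

Lemma nf_upd_above m K r k : m <= r -> nf m (upd K r k) = nf m K.
Proof.
move=> mr; rewrite /nf; congr flatten; apply/eq_in_map => i.
by rewrite mem_iota => /andP[_ /leq_trans/(_ mr) ir]; rewrite /upd (ltn_eqF ir).
Qed.

Lemma nf_upd m K k : nf m.+1 (upd K m k) = nf m K ++ row m k.
Proof. by rewrite nfS nf_upd_above // /upd eqxx. Qed.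

Lemma pair_pow_commr m z x k : z <= x <= m ->
  chcong (pair_pow m z k ++ [:: x]) (x :: pair_pow m z k).
Proof.
move=> hzxm; elim: k => [|k IH] //; rewrite pair_powS -catA IH.
by rewrite -[[:: m; z] ++ x :: _]/([:: m; z; x] ++ _) (chcong_mzx hzxm).
Qed.

Lemma pair_pow_pairC m x y k : x <= m -> y <= m ->
  chcong ([:: m; x] ++ pair_pow m y k) (pair_pow m y k ++ [:: m; x]).
Proof.
move=> hx hy; elim: k => [|k IH]; first by rewrite cats0.
by rewrite pair_powS catA (chcong_pairC hx hy) -!catA IH.
Qed.

Section PairsRow.
Variables (m : nat) (k : nat -> nat).

Lemma pairs_row_commr L x : x <= m -> (forall y, y \in L -> 0 < k y -> y <= x) ->
  chcong (pairs_row m k L ++ [:: x]) (x :: pairs_row m k L).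
Proof.
move=> hx; elim: L => [|y L IH] hL //=; rewrite pairs_row_cons -catA IH; last first.
  by move=> z hz; apply: hL; rewrite inE hz orbT.
case hky: (k y) => [|d] //; rewrite -[x :: _]cat1s catA pair_pow_commr //.
by rewrite hx hL ?inE ?eqxx ?hky.
Qed.

Lemma pairs_row_pairC L x : x <= m -> all (leq^~ m) L ->
  chcong ([:: m; x] ++ pairs_row m k L) (pairs_row m k L ++ [:: m; x]).
Proof.
move=> hx; elim: L => [//|y L IH] /andP[hy /IH {}IH].
rewrite pairs_row_cons catA (@pair_pow_pairC m x y (k y) hx hy).
by rewrite -!catA IH.
Qed.

Lemma pairs_row_incr L x : x <= m -> all (leq^~ m) L -> uniq L -> x \in L ->
  chcong (pairs_row m (incr k x) L) (pairs_row m k L ++ [:: m; x]).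
Proof.
move=> hx; elim: L => [//|y L IH] /andP[hy hL] /andP[yL uL].
rewrite inE !pairs_row_cons -catA /incr {1}/upd; case: (eqVneq y x) => [eyx _|nyx].
  subst y; rewrite (@eq_in_pairs_row m _ k L) => [|z zL]; last first.
    by rewrite /upd; case: eqP => // ezx; rewrite -ezx zL in yL.
  rewrite pair_powS -catA [X in chcong _ X]catA -pairs_row_cons.
  by apply: pairs_row_pairC => //=; rewrite hx.
by rewrite orFb => /(IH hL uL) <-.
Qed.

End PairsRow.

(* 0 when no y < l has 0 < k y; harmless, as x < max_active k l then fails
   for every letter x. *)
Fixpoint max_active (k : nat -> nat) (l : nat) : nat :=
  if l is l'.+1 then (if 0 < k l' then l' else max_active k l') else 0.

Lemma max_active_ge k l y : y < l -> 0 < k y -> y <= max_active k l.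
Proof.
elim: l => [//|l IH] /=; rewrite ltnS leq_eqVlt => /predU1P[-> kl|yl ky].
  by rewrite kl.
by case: ifP => _; [apply: ltnW | apply: IH].
Qed.

Lemma max_active_gt0 k l : 0 < max_active k l -> max_active k l < l /\ 0 < k (max_active k l).
Proof.
elim: l => [//|l IH] /=; case: ifP => [//|_ /IH[lt ->]]; split=> //.
exact: ltnW.
Qed.

Lemma nseq_commr m d x : x <= m ->
  chcong (nseq d.+1 m ++ [:: x]) ([:: m; x] ++ nseq d m).
Proof.
move=> hx; elim: d => [//|d IH].
rewrite -[nseq d.+2 m ++ _]/([:: m] ++ (nseq d.+1 m ++ [:: x])) IH.
by rewrite -[[:: m] ++ _]/([:: m; m; x] ++ nseq d m) (chcong_mmx hx).
Qed.

Lemma pairs_row_iota_incr m k x : x < m ->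
  chcong (pairs_row m (incr k x) (iota 0 m)) (pairs_row m k (iota 0 m) ++ [:: m; x]).
Proof.
move=> xm; apply: pairs_row_incr; rewrite ?iota_uniq ?mem_iota ?(ltnW xm) //.
by apply/allP=> y; rewrite mem_iota => /andP[_ /ltnW].
Qed.

Section Row.
Variables (m : nat) (k : nat -> nat).

Lemma row_incr_last : row m (incr k m) = row m k ++ [:: m].
Proof.
rewrite /row -catA -[[:: m]]/(nseq 1 m) -nseqD addn1 {2}/incr /upd eqxx.
congr (_ ++ _); apply: eq_in_pairs_row => y.
by rewrite mem_iota => /andP[_ ym]; rewrite /incr /upd (ltn_eqF ym).
Qed.

Lemma row_commr x : k m = 0 -> max_active k m <= x -> x <= m ->
  chcong (row m k ++ [:: x]) (x :: row m k).
Proof.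
move=> km0 ax xm; rewrite /row km0 cats0 pairs_row_commr // => y.
by rewrite mem_iota => /andP[_ ym] ky; apply: leq_trans ax; apply: max_active_ge.
Qed.

Lemma row_transfer_top x : x < m -> 0 < k m ->
  chcong (row m k ++ [:: x]) (row m (transfer k m x)).
Proof.
move=> xm; case km: (k m) => [//|d] _.
have transfer_m : transfer k m x m = d.
  by rewrite /transfer /incr /upd eqxx eq_sym (ltn_eqF xm) km.
have e : pairs_row m (transfer k m x) (iota 0 m) = pairs_row m (incr k x) (iota 0 m).
  apply: eq_in_pairs_row => y; rewrite mem_iota => /andP[_ ym].
  by rewrite /transfer /incr /upd (ltn_eqF ym) (ltn_eqF xm).
rewrite /row e km transfer_m -catA (nseq_commr d (ltnW xm)) catA.
by rewrite -(pairs_row_iota_incr k xm).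
Qed.

Lemma row_transfer_below x : k m = 0 -> x < max_active k m ->
  chcong (row m k ++ [:: x]) (max_active k m :: row m (transfer k (max_active k m) x)).
Proof.
set y := max_active k m => km0 xy.
have [ym ky] : y < m /\ 0 < k y by apply: max_active_gt0; apply: leq_ltn_trans xy.
have xm := ltn_trans xy ym.
set k1 := upd k y (k y).-1.
have incr_k1y : {in iota 0 m, incr k1 y =1 k}.
  by move=> z _; rewrite /incr /k1 /upd; case: eqP => [->|//]; rewrite eqxx prednK.
have active_le_y z : z \in iota 0 m -> 0 < transfer k y x z -> z <= y.
  rewrite mem_iota => /andP[_ zm]; rewrite /transfer /incr /k1 /upd.
  case: eqP => [-> _|_]; first exact: ltnW.
  by case: eqP => [->//|_]; apply: max_active_ge.
have transfer_m : transfer k y x m = k m.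
  by rewrite /transfer /incr /k1 /upd ![m == _]eq_sym (ltn_eqF xm) (ltn_eqF ym).
have xym : x <= y <= m by rewrite (ltnW xy) (ltnW ym).
rewrite /row transfer_m km0 !cats0 -(eq_in_pairs_row _ incr_k1y) (pairs_row_iota_incr k1 ym).
rewrite -catA -[[:: m; y] ++ _]/[:: m; y; x] (chcong_kji_kij xym).
rewrite -[[:: m; x; y]]/([:: m; x] ++ [:: y]) catA -(pairs_row_iota_incr k1 xm).
by rewrite (pairs_row_commr (ltnW ym) active_le_y).
Qed.

End Row.

(* Right multiplication of [nf m K] by a letter x < m, row m' = m - 1 first:
   - if x = m', it lengthens the final power of m';
   - else m'^(d+1) x ~ (m' x) m'^d turns one m' into a pair (m' x);
   - else (m' y) x ~ (m' x) y for the last active column y, if x < y, and y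
     moves on to the lower rows;
   - else x commutes with the whole row and moves on. *)
Fixpoint insert (m : nat) (K : nat -> nat -> nat) (x : nat) : nat -> nat -> nat :=
  if m is m'.+1 then
    let k := K m' in
    let y := max_active k m' in
    if x == m' then upd K m' (incr k m')
    else if 0 < k m' then upd K m' (transfer k m' x)
    else if x < y then insert m' (upd K m' (transfer k y x)) y
    else insert m' K x
  else K.

Lemma insert_above m K x r : m <= r -> insert m K x r = K r.
Proof.
elim: m K x => [//|m IH] K x mr /=; have rm := gtn_eqF mr; have {}mr := ltnW mr.
by do 3?case: ifP => _; rewrite ?IH // /upd rm.
Qed.

Lemma chcong_insert m K x : x < m -> chcong (nf m K ++ [:: x]) (nf m (insert m K x)).
Proof.
elim: m K x => [//|m IH] K x; rewrite ltnS leq_eqVlt => /predU1P[->|xm] /=.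
  by rewrite eqxx nf_upd row_incr_last nfS catA.
rewrite (ltn_eqF xm); case: ifP => [km|/negbT].
  by rewrite nf_upd nfS -catA row_transfer_top.
rewrite -leqNgt leqn0 => /eqP km0; rewrite nfS -catA.
case: ifP => [xa|/negbT]; last first.
  rewrite -leqNgt => ax; rewrite (row_commr km0 ax (ltnW xm)) -[x :: _]cat1s.
  by rewrite catA (IH K x xm) nfS (insert_above _ _ (leqnn m)).
set y := max_active (K m) m; set k' := transfer (K m) y x.
have ym : y < m by case: (max_active_gt0 (leq_ltn_trans (leq0n x) xa)).
rewrite (row_transfer_below km0 xa) -[y :: _]cat1s catA -(nf_upd_above K k' (leqnn m)).
by rewrite (IH _ y ym) nfS (insert_above _ _ (leqnn m)) /upd eqxx.
Qed.

Definition nf_exps (n : nat) (w : seq nat) : nat -> nat -> nat :=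
  foldl (insert n) (fun _ _ => 0) w.

Lemma nf_zero m : nf m (fun _ _ => 0) = [::].
Proof.
rewrite /nf; elim: (iota 0 m) => [//|r rs IH] /=; rewrite IH cats0 /row cats0.
by rewrite /pairs_row; elim: (iota 0 r).
Qed.

Lemma chcong_nf n w : all (gtn n) w -> chcong w (nf n (nf_exps n w)).
Proof.
elim/last_ind: w => [|w x IH]; first by rewrite /nf_exps nf_zero.
rewrite all_rcons /nf_exps foldl_rcons -cats1 => /andP[xn /IH wnf].
by rewrite -(chcong_insert _ xn) -wnf.
Qed.

Lemma all_flatten (T : Type) (a : pred T) (ss : seq (seq T)) :
  all a (flatten ss) = all (all a) ss.
Proof. by elim: ss => //= s ss IH; rewrite all_cat IH. Qed.

Lemma all_row (P : pred nat) r k : (forall y, y <= r -> P y) -> all P (row r k).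
Proof.
move=> hP; rewrite /row /pairs_row all_cat all_nseq hP ?orbT ?andbT //.
rewrite all_flatten all_map; apply/allP => y; rewrite mem_iota => /andP[_ /ltnW yr] /=.
by rewrite all_flatten all_nseq /= !hP ?orbT.
Qed.

Lemma all_nf m K : all (gtn m) (nf m K).
Proof.
rewrite /nf all_flatten all_map; apply/allP => r; rewrite mem_iota => /andP[_ rm].
by apply: all_row => y yr; apply: leq_ltn_trans rm.
Qed.

(** * Normal forms are determined by their letter counts *)

Lemma count_pair_pow m y k t : m != t -> count (pred1 t) (pair_pow m y k) = (y == t) * k.
Proof.
move=> mt; elim: k => [|k IH]; rewrite ?muln0 // pair_powS count_cat IH /=.
by rewrite (negbTE mt) mulnS add0n addn0.
Qed.

Lemma count_pairs_row m k L t : m != t -> uniq L ->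
  count (pred1 t) (pairs_row m k L) = (t \in L) * k t.
Proof.
move=> mt; elim: L => [//|y L IH] /andP[yL uL].
rewrite pairs_row_cons count_cat count_pair_pow // IH // inE.
case: (eqVneq y t) => [<-|_]; first by rewrite (negbTE yL) mul0n addn0.
by rewrite mul0n add0n.
Qed.

Lemma count_row r k t : t < r -> count (pred1 t) (row r k) = k t.
Proof.
move=> tr; rewrite /row count_cat count_pairs_row ?iota_uniq ?(gtn_eqF tr) //.
by rewrite mem_iota tr count_nseq /= (gtn_eqF tr) mul1n addn0.
Qed.

Lemma row_inj r k k' :
  (forall t, t <= r -> count (pred1 t) (row r k) = count (pred1 t) (row r k')) ->
  row r k = row r k'.
Proof.
move=> hc; have e : pairs_row r k (iota 0 r) = pairs_row r k' (iota 0 r).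
  apply: eq_in_pairs_row => t; rewrite mem_iota => /andP[_ tr].
  by rewrite -(count_row k tr) -(count_row k' tr) hc // ltnW.
have := hc r (leqnn r); rewrite /row !count_cat e => /addnI.
by rewrite !count_nseq /= eqxx !mul1n => ->.
Qed.

Lemma nf_inj n K K' :
  (forall r t, r <= n -> count (pred1 t) (nf r K) = count (pred1 t) (nf r K')) ->
  nf n K = nf n K'.
Proof.
elim: n => [//|n IH] hc; rewrite !nfS IH => [|r t rn]; last exact/hc/leqW.
congr (_ ++ _); apply: row_inj => t _.
by have := hc n.+1 t (leqnn _); rewrite !nfS !count_cat (hc n t (leqnSn n)) => /addnI.
Qed.

Lemma count_leq_inj (s s' : seq nat) j :
  (forall t, t <= j -> count (leq^~ t) s = count (leq^~ t) s') ->
  forall t, t <= j -> count (pred1 t) s = count (pred1 t) s'.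
Proof.
have leqS t u : count (leq^~ t.+1) u = count (leq^~ t) u + count (pred1 t.+1) u.
  by elim: u => //= x u ->; lia.
have e0 : pred1 0 =1 leq^~ 0 by move=> x; rewrite /= leqn0.
move=> h [|t] tj; first by rewrite !(eq_count e0) h.
by have := h t.+1 tj; rewrite !leqS (h t (ltnW tj)) => /addnI.
Qed.

(** * Weights and peaks *)

Section Weights.
Local Open Scope R_scope.
Variables t j : nat.

Ltac rmax := unfold Rmax in *; repeat (destruct Rle_dec); try lra.

Definition wt (x : nat) : R := if (x <= t)%N then 1 else if (x <= j)%N then 0 else -1.

Fixpoint weight (u : seq nat) : R := if u is x :: u' then wt x + weight u' else 0.

Fixpoint peak (u : seq nat) : R := if u is x :: u' then Rmax 0 (wt x + peak u') else 0.

Lemma wt_cases x : wt x = 1 \/ wt x = 0 \/ wt x = -1.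
Proof. by rewrite /wt; case: ifP => _; [left | case: ifP => _; right; [left | right]]. Qed.

Lemma wt_le1 x : wt x <= 1.
Proof. by case: (wt_cases x) => [->|[->|->]]; lra. Qed.

Lemma wt_antitone x y : (x <= y)%N -> wt y <= wt x.
Proof.
move=> xy; rewrite /wt; case: (leqP y t) => yt; first by rewrite (leq_trans xy yt); lra.
case: (leqP x t) => _; first by case: ifP => _; lra.
case: (leqP y j) => yj; first by rewrite (leq_trans xy yj); lra.
by case: ifP => _; lra.
Qed.

Lemma weight_cat u v : weight (u ++ v) = weight u + weight v.
Proof. by elim: u => [|x u IH] /=; rewrite ?IH; lra. Qed.

Lemma peak_ge0 u : 0 <= peak u.
Proof. by case: u => [|x u] /=; rmax. Qed.

Lemma weight_le_peak u : weight u <= peak u.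
Proof. by elim: u => [|x u IH] /=; rmax. Qed.

Lemma peak_cat u v : peak (u ++ v) = Rmax (peak u) (weight u + peak v).
Proof.
elim: u => [|x u IH] /=; first by have := peak_ge0 v; rmax.
by rewrite IH; have := peak_ge0 u; have := peak_ge0 v; rmax.
Qed.

Lemma peak_rel i j0 k : (i <= j0)%N -> (j0 <= k)%N ->
  peak [:: j0; k; i] = peak [:: k; j0; i] /\ peak [:: k; j0; i] = peak [:: k; i; j0].
Proof.
move=> /wt_antitone + /wt_antitone; rewrite /=.
by case: (wt_cases i) => [->|[->|->]]; case: (wt_cases j0) => [->|[->|->]];
  case: (wt_cases k) => [->|[->|->]] => h1 h2; split; rmax.
Qed.

Lemma chcong_weight_peak a b : chcong a b -> (weight a, peak a) = (weight b, peak b).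
Proof.
apply: (chcong_invariant (f := fun w => (weight w, peak w))).
  by move=> u v s s' [ws ps]; rewrite !peak_cat !weight_cat ws ps.
move=> i j0 k ij jk; have [p1 p2] := peak_rel ij jk.
by rewrite p1 p2 /=; split; congr (_, _); lra.
Qed.

Lemma chcong_peak a b : chcong a b -> peak a = peak b.
Proof. by move/chcong_weight_peak => [_ ->]. Qed.

Lemma peak_low u : all (leq^~ j) u -> peak u = INR (count (leq^~ t) u).
Proof.
elim: u => [|x u IH] //= /andP[xj /IH ->]; have := pos_INR (count (leq^~ t) u).
by rewrite /wt xj plus_INR; case: (x <= t)%N => /=; rmax.
Qed.

Lemma peak_cat0 u v : peak v = 0 -> peak (u ++ v) = peak u.
Proof. by move=> pv; rewrite peak_cat pv; have := weight_le_peak u; rmax. Qed.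

Lemma peak_flatten0 ss : (forall w, w \in ss -> peak w = 0) -> peak (flatten ss) = 0.
Proof.
elim: ss => [//|w ss IH] h0 /=; rewrite peak_cat0; first by apply: h0; rewrite mem_head.
by apply: IH => w' w'ss; apply: h0; rewrite inE w'ss orbT.
Qed.

Lemma peak_high_cons r u : (t <= j < r)%N -> peak u <= 1 -> peak (r :: u) = 0.
Proof.
case/andP=> tj jr pu; rewrite /= /wt (ltn_geF (leq_ltn_trans tj jr)) (ltn_geF jr).
by rmax.
Qed.

Lemma peak_row_high r k : (t <= j < r)%N -> peak (row r k) = 0.
Proof.
move=> tjr; have p1 y : peak [:: y] <= 1 by rewrite /=; have := wt_le1 y; rmax.
rewrite /row peak_cat0; last by elim: (k r) => [//|n IH]; rewrite peak_high_cons ?IH //; lra.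
apply: peak_flatten0 => w /mapP[y _ ->]; apply: peak_flatten0 => w2 /nseqP[-> _].
exact: peak_high_cons.
Qed.

Lemma peak_nf n K : (t <= j < n)%N -> peak (nf n K) = INR (count (leq^~ t) (nf j.+1 K)).
Proof.
case/andP=> tj jn; rewrite -(subnKC jn) {1}/nf iotaD map_cat flatten_cat peak_cat0.
  by rewrite peak_low //; exact: (all_nf j.+1 K).
apply: peak_flatten0 => w /mapP[r]; rewrite mem_iota => /andP[jr _] ->.
by apply: peak_row_high; rewrite tj.
Qed.

End Weights.

(** * Block-diagonal tropical matrices *)

Lemma taddA : associative tadd.
Proof. by case=> [a|] [b|] [c|] //=; rewrite Rmax_assoc. Qed.

Lemma taddC : commutative tadd.
Proof. by case=> [a|] [b|] //=; rewrite Rmax_comm. Qed.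

Lemma tadd0t : left_id None tadd.
Proof. by case. Qed.

Lemma taddt0 : right_id None tadd.
Proof. by case. Qed.

HB.instance Definition _ := Monoid.isComLaw.Build trop None tadd taddA taddC tadd0t.

Lemma tmult0 : right_zero None tmul.
Proof. by case. Qed.

Definition tblock (f g : trop) : bool -> bool -> trop :=
  fun a c => if a then (if c then Some R0 else None) else (if c then g else f).

Definition tmul2 (X Y : bool -> bool -> trop) : bool -> bool -> trop :=
  fun a c => tadd (tmul (X a false) (Y false c)) (tmul (X a true) (Y true c)).

Lemma tmul2_tblock f g f' g' a c :
  tmul2 (tblock f g) (tblock f' g') a c = tblock (tmul f f') (tadd (tmul f g') g) a c.
Proof.
rewrite /tmul2 /tblock; case: a; case: c; rewrite /= ?tmult0 ?taddt0 //.
- by rewrite Rplus_0_l.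
- by case: g => [x|] //=; rewrite Rplus_0_r.
Qed.

Definition bdiag2_entry (X : nat -> bool -> bool -> trop) (r c : nat) : trop :=
  if r./2 == c./2 then X r./2 (odd r) (odd c) else None.

Definition bdiag2 (N : nat) (X : nat -> bool -> bool -> trop) : 'M[trop]_N :=
  \matrix_(r, c) bdiag2_entry X r c.

Lemma big_tadd_pair N (F : nat -> trop) b : b.*2.+1 < N ->
  (forall k, k./2 != b -> F k = None) ->
  \big[tadd/None]_(k < N) F k = tadd (F b.*2) (F b.*2.+1).
Proof.
move=> bN F0; have b2N : b.*2 < N by apply: ltnW.
rewrite (bigD1 (Ordinal b2N)) // (bigD1 (Ordinal bN)) /=; last first.
  by rewrite -val_eqE /= (gtn_eqF (ltnSn _)).
rewrite (@big1 _ None tadd) ?taddt0 //.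
move=> k /andP[/eqP nk0 /eqP nk1]; apply: F0; apply/eqP => kb.
have := odd_double_half k; rewrite kb.
by case: (odd k) => /= ek; [apply: nk1 | apply: nk0]; apply: val_inj => /=; lia.
Qed.

Lemma tmxmul_bdiag2 N X Y : ~~ odd N ->
  tmxmul (bdiag2 N X) (bdiag2 N Y) = bdiag2 N (fun b => tmul2 (X b) (Y b)).
Proof.
move=> evenN; apply/matrixP => r c; rewrite !mxE; set b := r./2.
have bN : b.*2.+1 < N.
  have := odd_double_half r; have := odd_double_half N; have := ltn_ord r.
  by rewrite (negbTE evenN) /b; lia.
under eq_bigr => k _ do rewrite !mxE.
rewrite (@big_tadd_pair N (fun k => tmul (bdiag2_entry X r k) (bdiag2_entry Y k c)) b bN).
  rewrite /bdiag2_entry /= doubleK uphalf_double odd_double -/b eqxx.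
  by case: eqP => _; rewrite ?tmult0.
by move=> k kb; rewrite /bdiag2_entry eq_sym (negbTE kb).
Qed.

Lemma tmx1_bdiag2 N : tmx1 N = bdiag2 N (fun _ => tblock (Some R0) None).
Proof.
apply/matrixP => r c; rewrite !mxE /bdiag2_entry /tblock.
have -> : (r == c) = (r./2 == c./2) && (odd r == odd c).
  rewrite -val_eqE /=; apply/eqP/andP => [-> //|[/eqP e1 /eqP e2]].
  by rewrite -(odd_double_half r) -(odd_double_half c) e1 e2.
by case: eqP => //= _; case: (odd r); case: (odd c).
Qed.

Lemma upper_tri_bdiag2 N f g : upper_tri (bdiag2 N (fun b => tblock (f b) (g b))).
Proof.
move=> i j ji; rewrite mxE /bdiag2_entry /tblock; case: eqP => // e.
have := odd_double_half i; have := odd_double_half j; rewrite e.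
by case: (odd i); case: (odd j) => //= hj hi; lia.
Qed.

Lemma block_diag2_bdiag2 N X : block_diag2 (bdiag2 N X).
Proof. by move=> i j ij; rewrite mxE /bdiag2_entry (negbTE ij). Qed.

Lemma eq_bdiag2 N X Y : (forall b a c, X b a c = Y b a c) -> bdiag2 N X = bdiag2 N Y.
Proof. by move=> eXY; apply/matrixP => r c; rewrite !mxE /bdiag2_entry eXY. Qed.

(** * The representation *)

Definition peak_entry t j (w : seq nat) : trop := if w is [::] then None else Some (peak t j w).

Lemma odflt_peak_entry t j w : odflt R0 (peak_entry t j w) = peak t j w.
Proof. by case: w. Qed.

Definition wblock (p : nat * nat) (w : seq nat) : bool -> bool -> trop :=
  tblock (Some (weight p.1 p.2 w)) (peak_entry p.1 p.2 w).

Lemma tmul2_wblock p u v a c : tmul2 (wblock p u) (wblock p v) a c = wblock p (u ++ v) a c.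
Proof.
rewrite tmul2_tblock /wblock weight_cat; congr (tblock _ _ a c).
case: u => [|x u]; first by case: v => [|y v] //=; rewrite Rplus_0_l.
case: v => [|y v]; first by rewrite cats0.
set w := (x :: u) ++ _; rewrite (_ : peak_entry _ _ w = Some (peak p.1 p.2 w)) //.
by rewrite peak_cat Rmax_comm.
Qed.

Lemma wblock_chcong p a b : chcong a b -> wblock p a = wblock p b.
Proof.
move=> ab; case: (chcong_weight_peak p.1 p.2 ab) => wab pab.
rewrite /wblock wab /peak_entry; congr (tblock _ _).
by case: a b ab pab {wab} => [|x a] [|y b] /chcong_size //= _ ->.
Qed.

Definition tri_pairs (n : nat) : seq (nat * nat) :=
  flatten [seq [seq (t, j) | t <- iota 0 j.+1] | j <- iota 0 n].

Lemma size_tri_pairs n : (size (tri_pairs n)).*2 = n * n.+1.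
Proof.
elim: n => [//|n IH]; rewrite /tri_pairs -addn1 iotaD map_cat flatten_cat size_cat.
by rewrite -/(tri_pairs n) /= cats0 size_map size_iota doubleD IH; lia.
Qed.

Lemma mem_tri_pairs n t j : t <= j < n -> (t, j) \in tri_pairs n.
Proof.
case/andP=> tj jn; apply/flattenP; exists [seq (t', j) | t' <- iota 0 j.+1].
  by apply/mapP; exists j; rewrite ?mem_iota.
by apply/mapP; exists t; rewrite ?mem_iota.
Qed.

Definition rho (n : nat) (w : seq 'I_n) : 'M[trop]_(n * n.+1) :=
  bdiag2 _ (fun b => wblock (nth (0, 0) (tri_pairs n) b) (map val w)).

Lemma rho_nil n : rho [::] = tmx1 (n * n.+1).
Proof. by rewrite tmx1_bdiag2. Qed.

Lemma rho_cat n (u v : seq 'I_n) : rho (u ++ v) = tmxmul (rho u) (rho v).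
Proof.
rewrite tmxmul_bdiag2 ?oddM ?andbN // /rho map_cat.
by apply: eq_bdiag2 => b a c; rewrite tmul2_wblock.
Qed.

Lemma chcong_val n (u v : seq 'I_n) : chinese_cong u v -> chcong (map val u) (map val v).
Proof.
elim=> [i j k u0 v0 hij hjk|i j k u0 v0 hij hjk|w|w1 w2 _ IH|w1 w2 w3 _ IH1 _ IH2].
- by rewrite !map_cat; apply: chcong_rel1.
- by rewrite !map_cat; apply: chcong_rel2.
- exact: chcong_refl.
- exact: chcong_sym.
- exact: chcong_trans IH2.
Qed.

Lemma rho_cong n (u v : seq 'I_n) : chinese_cong u v -> rho u = rho v.
Proof. by move=> /chcong_val uv; apply: eq_bdiag2 => b a c; rewrite (wblock_chcong _ uv). Qed.

Lemma rho_shape n (u : seq 'I_n) : upper_tri (rho u) /\ block_diag2 (rho u).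
Proof. by split; [apply: upper_tri_bdiag2 | apply: block_diag2_bdiag2]. Qed.

Lemma peak_rho n (u v : seq 'I_n) t j : t <= j < n -> rho u = rho v ->
  peak t j (map val u) = peak t j (map val v).
Proof.
move=> tjn ruv; set b := index (t, j) (tri_pairs n).
have bn : b < size (tri_pairs n) by rewrite index_mem mem_tri_pairs.
have bN : b.*2.+1 < n * n.+1 by rewrite -size_tri_pairs -doubleS leq_double.
have := congr1 (fun M : 'M_(n * n.+1) => M (Ordinal (ltnW bN)) (Ordinal bN)) ruv.
rewrite !mxE /bdiag2_entry /= doubleK uphalf_double odd_double eqxx.
by rewrite nth_index ?mem_tri_pairs // => /(congr1 (odflt R0)); rewrite !odflt_peak_entry.
Qed.

(* A monotone retraction of nat onto ['I_n.+1], to pull congruences back. *)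
Definition clamp n (x : nat) : 'I_n.+1 := inord (minn x n).

Lemma clamp_val n (i : 'I_n.+1) : clamp n i = i.
Proof. by rewrite /clamp (minn_idPl (ltnSE (ltn_ord i))) inord_val. Qed.

Lemma clamp_mono n x y : x <= y -> clamp n x <= clamp n y.
Proof. by move=> xy; rewrite /clamp !inordK ?ltnS ?geq_minr // leq_min geq_minr andbT; lia. Qed.

Lemma chinese_cong_val n (u v : seq 'I_n.+1) :
  chcong (map val u) (map val v) -> chinese_cong u v.
Proof.
suff clamp_cong a b : chcong a b -> chinese_cong (map (clamp n) a) (map (clamp n) b).
  by move/clamp_cong; rewrite -!map_comp !(eq_map (@clamp_val n)) !map_id.
elim=> [i j k u0 v0 hij hjk|i j k u0 v0 hij hjk|w|w1 w2 _ IH|w1 w2 w3 _ IH1 _ IH2].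
- by rewrite !map_cat; apply: chc_rel1; apply: clamp_mono.
- by rewrite !map_cat; apply: chc_rel2; apply: clamp_mono.
- exact: chc_refl.
- exact: chc_sym.
- exact: chc_trans IH2.
Qed.

Lemma rho_faithful n (u v : seq 'I_n) : 0 < n -> rho u = rho v -> chinese_cong u v.
Proof.
case: n u v => [//|n] u v _ ruv; apply: chinese_cong_val.
have letters (w : seq 'I_n.+1) : all (gtn n.+1) (map val w).
  by apply/allP => _ /mapP[i _ ->]; apply: ltn_ord.
have nfU := chcong_nf (letters u); have nfV := chcong_nf (letters v).
suff enf : nf n.+1 (nf_exps n.+1 (map val u)) = nf n.+1 (nf_exps n.+1 (map val v)).
  by apply: chcong_trans nfU _; rewrite enf; apply: chcong_sym.
apply: nf_inj => -[|j] t jn; first by [].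
have [tj|jt] := leqP t j; last first.
  have out K : count (pred1 t) (nf j.+1 K) = 0.
    by apply/count_memPn/negP => /(allP (all_nf _ _)); rewrite /= ltnS leqNgt jt.
  by rewrite !out.
apply: (count_leq_inj _ tj) => s sj; have sjn : s <= j < n.+1 by rewrite sj.
apply: INR_eq; rewrite -(peak_nf _ sjn) -(peak_nf _ sjn).
by rewrite -(chcong_peak _ _ nfU) -(chcong_peak _ _ nfV); apply: peak_rho.
Qed.

Theorem theoremI (n : nat) (hn : (0 < n)%N) :
  exists rho : seq 'I_n -> 'M[trop]_(n * n.+1),
    [/\ chinese_trop_rep rho,
        chinese_faithful rho &
        forall u, upper_tri (rho u) /\ block_diag2 (rho u)].
Proof.
exists (@rho n); split.
- split; [exact: rho_nil | exact: rho_cat | exact: rho_cong].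
- by move=> u v; apply: rho_faithful.
- exact: rho_shape.
Qed.
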